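(* Let $m=p_1^{\alpha_1}p_2^{\alpha_2}$, where $p_1,p_2>2$ are distinct primes and $\alpha_1,\alpha_2$ are positive integers. Let $t=\mathrm{ord}_m(2)$ and let $\gamma\in\mathbb{F}_{2^t}^*$ be a primitive $m$th root of unity. Then $m$ is good if and only if there is a polynomial $Q(X)=X^u+aX^v+b\in\mathbb{F}_{2^t}[X]$ (with $u,v$ nonnegative integers, $a,b\in\mathbb{F}_{2^t}$) such that (1) $ab\neq 0$; (2) the three residues $u\bmod m$, $v\bmod m$, $0$ are pairwise distinct; and (3) $Q(\gamma)=Q(\gamma^{s_{01}})=Q(\gamma^{s_{10}})=0$ and $Q(1)\neq 0$.
   Context: $\mathrm{ord}_m(2)$ is the multiplicative order of $2$ modulo $m$. The canonical set of $m$ is $S_m=\{s_{01},s_{10},s_{11}\}\subseteq\mathbb{Z}_m$, where for $\sigma=(\sigma_1,\sigma_2)\in\{0,1\}^2\setminus\{(0,0)\}$, $s_\sigma$ is the unique element of $\mathbb{Z}_m$ with $s_\sigma\equiv\sigma_1 \pmod{p_1^{\alpha_1}}$ and $s_\sigma\equiv \sigma_2\pmod{p_2^{\alpha_2}}$ (so $s_{11}=1$). An $S_m$-decoding polynomial is a polynomial $P(X)\in\mathbb{F}_{2^t}[X]$ such that $P(\gamma^s)=0$ for every $s\in S_m$ and $P(1)=1$. The number $m$ is called good if there exists an $S_m$-decoding polynomial with fewer than $4$ monomials (nonzero terms). *)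

From HB Require Import structures.
From mathcomp Require Import all_boot all_order all_algebra all_field.
Set Implicit Arguments. Unset Strict Implicit. Unset Printing Implicit Defensive.
Import GRing.Theory.
Local Open Scope ring_scope.

(* Multiplicative order of a modulo m: the least n >= 1 (searched among
   1..m) with a^n = 1 (mod m).  For m > 1 and gcd(a,m) = 1 this is ord_m(a). *)
Definition ord_mod (m a : nat) : nat :=
  (find (fun n => (a ^ n.+1 %% m == 1 %% m)%N) (iota 0 m)).+1.

(* The canonical element s_sigma of Z_m (represented by its residue in
   [0, q1*q2)) with s = r1 mod q1 and s = r2 mod q2. *)
Definition crt_elt (q1 q2 r1 r2 : nat) : nat :=
  find (fun n => (n %% q1 == r1 %% q1) && (n %% q2 == r2 %% q2))%N
       (iota 0 (q1 * q2)).

Definition s01 (q1 q2 : nat) : nat := crt_elt q1 q2 0 1.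
Definition s10 (q1 q2 : nat) : nat := crt_elt q1 q2 1 0.

Definition nmonomials (F : nzRingType) (P : {poly F}) : nat :=
  count (fun c => c != 0) P.

(* P is an S_m-decoding polynomial, S_m = {s01, s10, s11 = 1}. *)
Definition decoding_poly (F : fieldType) (q1 q2 : nat) (gamma : F)
    (P : {poly F}) : Prop :=
  [/\ P.[gamma ^+ s01 q1 q2] = 0, P.[gamma ^+ s10 q1 q2] = 0,
      P.[gamma ^+ 1] = 0 & P.[1] = 1].

Definition good (F : fieldType) (q1 q2 : nat) (gamma : F) : Prop :=
  exists P : {poly F}, decoding_poly q1 q2 gamma P /\ (nmonomials P < 4)%N.

(* If a binomial c X^e + d X^k vanishes at gamma, gamma^s01 and gamma^s10,
   then w := gamma^e / gamma^k satisfies c w^s + d = 0 for s in {1, s01, s10}.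
   If c != 0 this forces w^s01 = w^s10 = w, and s01 + s10 = 1 (mod m) then
   gives w = w^2, i.e. w = 1; if c = 0 then d = 0.  Either way c + d = 0: the
   binomial also vanishes at 1.  Hence a decoding polynomial has exactly three
   monomials, and dividing it by its lowest monomial and its leading
   coefficient yields Q; the same observation shows that conditions (1) and
   (2) already follow from (3).  Conversely Q / Q(1) is a decoding polynomial
   with at most three monomials. *)
From HB Require Import structures.
From mathcomp Require Import all_boot all_order all_algebra all_field.
From mathcomp Require Import ring.
Set Implicit Arguments.
Unset Strict Implicit.
Unset Printing Implicit Defensive.
Import GRing.Theory.
Local Open Scope ring_scope.

Lemma crt_eltP (q1 q2 r1 r2 : nat) : coprime q1 q2 -> (0 < q1)%N -> (0 < q2)%N ->
  (crt_elt q1 q2 r1 r2 = r1 %[mod q1] /\ crt_elt q1 q2 r1 r2 = r2 %[mod q2])%N.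
Proof.
move=> co_q12 q1_gt0 q2_gt0; rewrite /crt_elt.
set crt := fun n => _.
have has_crt : has crt (iota 0 (q1 * q2)).
  apply/hasP; exists (chinese q1 q2 r1 r2 %% (q1 * q2))%N.
    by rewrite mem_iota ltn_pmod // muln_gt0 q1_gt0.
  rewrite /crt (modn_dvdm _ (dvdn_mulr q2 (dvdnn q1))).
  rewrite (modn_dvdm _ (dvdn_mull q1 (dvdnn q2))).
  by rewrite chinese_modl // chinese_modr // !eqxx.
have := nth_find 0%N has_crt; rewrite nth_iota ?add0n; last first.
  by move: has_crt; rewrite has_find size_iota.
by case/andP=> /eqP -> /eqP ->.
Qed.

Lemma s01_add_s10 (q1 q2 : nat) : coprime q1 q2 -> (0 < q1)%N -> (0 < q2)%N ->
  (s01 q1 q2 + s10 q1 q2 = 1 %[mod q1 * q2])%N.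
Proof.
move=> co_q12 q1_gt0 q2_gt0; apply/eqP; rewrite chinese_remainder //.
have [s01_q1 s01_q2] := crt_eltP 0 1 co_q12 q1_gt0 q2_gt0.
have [s10_q1 s10_q2] := crt_eltP 1 0 co_q12 q1_gt0 q2_gt0.
rewrite /s01 /s10 -!(modnDm (crt_elt _ _ _ _)) s01_q1 s01_q2 s10_q1 s10_q2.
by rewrite !modnDm !eqxx.
Qed.

Lemma eq_expr_mod (R : pzSemiRingType) (m e k : nat) (x : R) :
  x ^+ m = 1 -> (e = k %[mod m])%N -> x ^+ e = x ^+ k.
Proof. by move=> xm ek; rewrite -(expr_mod e xm) ek expr_mod. Qed.

Lemma unity_root_neq0 (R : nzSemiRingType) (m : nat) (x : R) :
  (0 < m)%N -> x ^+ m = 1 -> x != 0.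
Proof.
by move=> m_gt0; apply: contra_eq_neq => ->; rewrite expr0n eqn0Ngt m_gt0 /= eq_sym oner_eq0.
Qed.

Lemma unity_root_affine_eq0 (F : fieldType) (m s1 s2 : nat) (w c d : F) :
  (1 < m)%N -> w ^+ m = 1 -> (s1 + s2 = 1 %[mod m])%N ->
  c * w + d = 0 -> c * w ^+ s1 + d = 0 -> c * w ^+ s2 + d = 0 -> c + d = 0.
Proof.
move=> m_gt1 wm s12 root1 root_s1 root_s2.
have [c0 | c_neq0] := eqVneq c 0; first by rewrite -root1 c0 !mul0r.
have w_neq0 : w != 0 := unity_root_neq0 (ltnW m_gt1) wm.
have root_eq s : c * w ^+ s + d = 0 -> w ^+ s = w.
  by rewrite -root1 => /addIr /(mulfI c_neq0).
have : w ^+ s1 * w ^+ s2 = w * 1.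
  by rewrite -exprD mulr1 (eq_expr_mod wm s12) expr1.
rewrite (root_eq _ root_s1) (root_eq _ root_s2) => /(mulfI w_neq0) w_eq1.
by rewrite -root1 w_eq1 mulr1.
Qed.

Section PolySupport.

Variable R : nzRingType.
Implicit Type P : {poly R}.

Definition poly_support P : seq nat := [seq i <- iota 0 (size P) | P`_i != 0].

Lemma mem_poly_support P i : (i \in poly_support P) = (P`_i != 0).
Proof.
rewrite mem_filter mem_iota add0n andbC; case: ltnP => //= size_le.
by rewrite nth_default ?eqxx.
Qed.

Lemma sorted_poly_support P : sorted ltn (poly_support P).
Proof. exact/sorted_filter/iota_ltn_sorted/ltn_trans. Qed.

Lemma nmonomialsE P : nmonomials P = size (poly_support P).
Proof. by rewrite /nmonomials size_filter -{1}(mkseq_nth 0 P) /mkseq count_map. Qed.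

Lemma nmonomials_le P (t : seq nat) :
  {subset poly_support P <= t} -> (nmonomials P <= size t)%N.
Proof.
by rewrite nmonomialsE; apply: uniq_leq_size; rewrite filter_uniq ?iota_uniq.
Qed.

Lemma nmonomialsZ_le (c : R) P : (nmonomials (c *: P) <= nmonomials P)%N.
Proof.
rewrite [X in (_ <= X)%N]nmonomialsE; apply: nmonomials_le => i.
by rewrite !mem_poly_support coefZ; apply: contra_neq => ->; rewrite mulr0.
Qed.

End PolySupport.

Lemma horner_poly_support (R : comNzRingType) (P : {poly R}) (x : R) :
  P.[x] = \sum_(i <- poly_support P) P`_i * x ^+ i.
Proof.
rewrite big_filter big_mkcond horner_coef -(big_mkord xpredT (fun i => P`_i * x ^+ i)).
rewrite /index_iota subn0; apply: eq_bigr => i _.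
by case: eqP => // ->; rewrite mul0r.
Qed.

Lemma nmonomials_trinomial (R : nzRingType) (u v : nat) (a b : R) :
  (nmonomials ('X^u + a *: 'X^v + b%:P) <= 3)%N.
Proof.
apply: (nmonomials_le (t := [:: u; v; 0%N])) => i; rewrite mem_poly_support.
apply: contraR; rewrite !inE => /norP [i_neq_u /norP [i_neq_v i_neq0]].
rewrite !coefD coefZ !coefXn coefC.
by rewrite (negbTE i_neq_u) (negbTE i_neq_v) (negbTE i_neq0) mulr0 !addr0.
Qed.

Lemma trinomial_normal_form (F : fieldType) (i j k : nat) (ci cj ck x : F) :
  (i <= j <= k)%N -> ck != 0 ->
  ci * x ^+ i + cj * x ^+ j + ck * x ^+ k
    = ck * x ^+ i * ('X^(k - i) + (cj / ck) *: 'X^(j - i) + (ci / ck)%:P).[x].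
Proof.
case/andP=> ij /(leq_trans ij) ik ck_neq0; rewrite !hornerE.
rewrite -(subnK ij) -(subnK ik) !exprD !subnK //.
by field.
Qed.

Section RootsOfUnity.

Variables (F : fieldType) (m s1 s2 : nat) (gamma : F).
Hypotheses (m_gt1 : (1 < m)%N) (gamma_m : gamma ^+ m = 1)
  (s12 : (s1 + s2 = 1 %[mod m])%N).

Definition vanishes_on_S (P : {poly F}) : Prop :=
  [/\ P.[gamma] = 0, P.[gamma ^+ s1] = 0 & P.[gamma ^+ s2] = 0].

Let gamma_neq0 : gamma != 0 := unity_root_neq0 (ltnW m_gt1) gamma_m.

Lemma binomial_vanishes_at1 (P : {poly F}) (c d : F) (e k : nat) :
  (forall x, x ^+ m = 1 -> P.[x] = c * x ^+ e + d * x ^+ k) ->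
  vanishes_on_S P -> P.[1] = 0.
Proof.
move=> P_binom [P_gamma P_s1 P_s2].
set w := gamma ^+ e / gamma ^+ k.
have wm : w ^+ m = 1.
  by rewrite exprMn exprVn -!exprM !(mulnC _ m) !exprM gamma_m !expr1n invr1 mulr1.
have root_w s : P.[gamma ^+ s] = 0 -> c * w ^+ s + d = 0.
  have gs_m : (gamma ^+ s) ^+ m = 1 by rewrite exprAC gamma_m expr1n.
  have gks_neq0 : (gamma ^+ k) ^+ s != 0 by rewrite !expf_neq0.
  rewrite P_binom // => P_s; apply: (mulIf gks_neq0); rewrite mul0r -P_s.
  rewrite /w exprMn exprVn (exprAC gamma e s) (exprAC gamma k s).
  by field; rewrite !expf_neq0.
rewrite P_binom ?expr1n ?mulr1 //.
apply: (unity_root_affine_eq0 m_gt1 wm s12 _ (root_w _ P_s1) (root_w _ P_s2)).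
by have := root_w 1%N; rewrite !expr1; apply.
Qed.

Lemma trinomial_conditions (u v : nat) (a b : F) :
  let Q := 'X^u + a *: 'X^v + b%:P in
  vanishes_on_S Q -> Q.[1] != 0 ->
  a * b != 0 /\ [/\ (u %% m != v %% m)%N, (u %% m != 0)%N & (v %% m != 0)%N].
Proof.
move=> Q Q_S Q1_neq0.
have Q_eval x : Q.[x] = x ^+ u + a * x ^+ v + b * x ^+ 0.
  by rewrite /Q !hornerE ?expr0 ?mulr1.
have not_binomial c d e k : (forall x, x ^+ m = 1 -> Q.[x] = c * x ^+ e + d * x ^+ k) -> False.
  by move=> Q_binom; case/eqP: Q1_neq0; exact: binomial_vanishes_at1 Q_binom Q_S.
split.
  apply: mulf_neq0; apply/eqP.
  - move=> a0; apply: (not_binomial 1 b u 0%N) => x _.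
    by rewrite Q_eval a0 mul1r mul0r addr0.
  - move=> b0; apply: (not_binomial 1 a u v) => x _.
    by rewrite Q_eval b0 mul1r mul0r addr0.
rewrite -(mod0n m); split; apply/eqP => exps_eq.
- apply: (not_binomial (1 + a) b v 0%N) => x xm.
  by rewrite Q_eval (eq_expr_mod xm exps_eq); ring.
- apply: (not_binomial (1 + b) a 0%N v) => x xm.
  by rewrite Q_eval (eq_expr_mod xm exps_eq); ring.
- apply: (not_binomial 1 (a + b) u 0%N) => x xm.
  by rewrite Q_eval (eq_expr_mod xm exps_eq); ring.
Qed.

Lemma decoding_trinomial (P : {poly F}) :
  vanishes_on_S P -> P.[1] != 0 -> (nmonomials P < 4)%N ->
  exists (u v : nat) (a b : F),
    vanishes_on_S ('X^u + a *: 'X^v + b%:P) /\ ('X^u + a *: 'X^v + b%:P).[1] != 0.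
Proof.
move=> P_S P1_neq0; rewrite nmonomialsE.
have := horner_poly_support P; have := sorted_poly_support P.
have : {in poly_support P, forall i, P`_i != 0} by move=> i; rewrite mem_poly_support.
have not_binomial c d e k : (forall x, P.[x] = c * x ^+ e + d * x ^+ k) -> False.
  by move=> P_binom; case/eqP: P1_neq0; apply: binomial_vanishes_at1 P_S => x _.
case: (poly_support P) => [|i [|j [|k [|l s]]]] //= coef_neq0 sorted_ijk P_sum _.
- exfalso; apply: (not_binomial 0 0 0%N 0%N) => x.
  by rewrite P_sum big_nil !mul0r addr0.
- exfalso; apply: (not_binomial P`_i 0 i 0%N) => x.
  by rewrite P_sum big_cons big_nil mul0r !addr0.
- exfalso; apply: (not_binomial P`_i P`_j i j) => x.
  by rewrite P_sum !big_cons big_nil addr0.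
have /and3P [ij jk _] := sorted_ijk.
have ck_neq0 : P`_k != 0 by apply: coef_neq0; rewrite !inE eqxx !orbT.
exists (k - i)%N, (j - i)%N, (P`_j / P`_k), (P`_i / P`_k).
set Q := _ + _ + _.
have P_eval x : P.[x] = P`_k * x ^+ i * Q.[x].
  rewrite P_sum !big_cons big_nil addr0 addrA trinomial_normal_form //.
  by rewrite (ltnW ij) (ltnW jk).
have Q_root x : x != 0 -> P.[x] = 0 -> Q.[x] = 0.
  move=> x_neq0 /eqP; rewrite P_eval !mulf_eq0 (negbTE ck_neq0) expf_eq0.
  by rewrite (negbTE x_neq0) andbF => /eqP.
case: P_S => P_gamma P_s1 P_s2; split.
  by split; apply: Q_root; rewrite ?expf_neq0.
by apply: contra_neq P1_neq0 => Q1; rewrite P_eval Q1 mulr0.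
Qed.

End RootsOfUnity.

Theorem lemma4 (p1 p2 a1 a2 : nat) (F : finFieldType) (gamma : F) :
  prime p1 -> prime p2 -> (2 < p1)%N -> (2 < p2)%N -> p1 != p2 ->
  (0 < a1)%N -> (0 < a2)%N ->
  let q1 := (p1 ^ a1)%N in
  let q2 := (p2 ^ a2)%N in
  let m := (q1 * q2)%N in
  let t := ord_mod m 2 in
  #|F| = (2 ^ t)%N ->
  m.-primitive_root gamma ->
  (good q1 q2 gamma <->
   exists (u v : nat) (a b : F),
     let Q := 'X^u + a *: 'X^v + b%:P in
     [/\ a * b != 0,
         [/\ (u %% m != v %% m)%N, (u %% m != 0)%N & (v %% m != 0)%N]
       & [/\ Q.[gamma] = 0, Q.[gamma ^+ s01 q1 q2] = 0,
             Q.[gamma ^+ s10 q1 q2] = 0 & Q.[1] != 0]]).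
Proof.
move=> p1_prime p2_prime _ _ p1_neq_p2 a1_gt0 a2_gt0 q1 q2 m t _ gamma_prim.
have q1_gt0 : (0 < q1)%N by rewrite expn_gt0 prime_gt0.
have q2_gt0 : (0 < q2)%N by rewrite expn_gt0 prime_gt0.
have co_q12 : coprime q1 q2.
  by rewrite coprime_pexpl // coprime_pexpr // prime_coprime // dvdn_prime2.
have m_gt1 : (1 < m)%N.
  apply: leq_trans (leq_pmulr _ q2_gt0).
  exact: leq_ltn_trans a1_gt0 (ltn_expl a1 (prime_gt1 p1_prime)).
have gamma_m : gamma ^+ m = 1 := prim_expr_order gamma_prim.
have s12 := s01_add_s10 co_q12 q1_gt0 q2_gt0.
have decodingE P : decoding_poly q1 q2 gamma P <->
    vanishes_on_S (s01 q1 q2) (s10 q1 q2) gamma P /\ P.[1] = 1.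
  by rewrite /decoding_poly expr1; split=> [[]|[[]]].
split=> [[P [/decodingE [P_S P1] P_small]] | [u [v [a [b [_ _ [Q_S1 Q_S2 Q_S3 Q1]]]]]]].
  have P1_neq0 : P.[1] != 0 by rewrite P1 oner_eq0.
  have [u [v [a [b [Q_S Q1]]]]] := decoding_trinomial m_gt1 gamma_m s12 P_S P1_neq0 P_small.
  have [ab_neq0 exps_distinct] := trinomial_conditions m_gt1 gamma_m s12 Q_S Q1.
  by exists u, v, a, b; case: Q_S.
set Q := _ + _ + _ in Q_S1 Q_S2 Q_S3 Q1 *.
exists (Q.[1]^-1 *: Q); split.
  by apply/decodingE; rewrite /vanishes_on_S !hornerZ Q_S1 Q_S2 Q_S3 mulVf ?mulr0.
exact: leq_ltn_trans (nmonomialsZ_le _ _) (leq_ltn_trans (nmonomials_trinomial u v a b) _).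
Qed.
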